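(* Let $\nu\in\mathbb{N}$ and $0<x\le1$. Then $1\le D_{\nu,x}<\infty$.
   Context: $|\cdot|$ is the maximum norm on $\mathbb{Z}^\nu$. $D_{\nu,x}:=\sup_{n\in\mathbb{Z}^\nu,\sigma\ge1/4}\sum_{m\in\mathbb{Z}^\nu}\frac{e^{\sigma|n|^x}}{e^{\sigma|m|^x}e^{\sigma|n-m|^x}}$ if $0<x<1$, and $D_{\nu,1}:=\sup_{n\in\mathbb{Z}^\nu,\sigma\ge1/4}\sum_{m\in\mathbb{Z}^\nu}\frac{(1+|n|)^{\nu+1}e^{\sigma|n|}}{(1+|m|)^{\nu+1}e^{\sigma|m|}(1+|n-m|)^{\nu+1}e^{\sigma|n-m|}}$. *)

From HB Require Import structures.
From mathcomp Require Import all_boot all_order all_algebra.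
From mathcomp Require Import all_classical all_reals all_analysis.
Set Implicit Arguments. Unset Strict Implicit. Unset Printing Implicit Defensive.
Import Order.TTheory GRing.Theory Num.Theory.
Local Open Scope classical_set_scope.
Local Open Scope ring_scope.

Definition Zpt (nu : nat) := {ffun 'I_nu -> int}.

Definition zsub (nu : nat) (n m : Zpt nu) : Zpt nu := [ffun i => n i - m i].

(* Maximum norm |n| = max_i |n_i| on Z^nu, as a real number (0 if nu = 0). *)
Definition maxnorm (R : realType) (nu : nat) (n : Zpt nu) : R :=
  ((\max_(i < nu) `|n i|%N)%N)%:R.

Definition Dterm_sub (R : realType) (nu : nat) (x sigma : R) (n m : Zpt nu) : R :=
  expR (sigma * maxnorm R n `^ x) /
  (expR (sigma * maxnorm R m `^ x) * expR (sigma * maxnorm R (zsub n m) `^ x)).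

Definition Dweight (R : realType) (nu : nat) (sigma k : R) : R :=
  (1 + k) ^+ nu.+1 * expR (sigma * k).

Definition Dterm_one (R : realType) (nu : nat) (sigma : R) (n m : Zpt nu) : R :=
  @Dweight R nu sigma (maxnorm R n) /
  (@Dweight R nu sigma (maxnorm R m) * @Dweight R nu sigma (maxnorm R (zsub n m))).

Definition Dterm (R : realType) (nu : nat) (x sigma : R) (n m : Zpt nu) : R :=
  if x < 1 then @Dterm_sub R nu x sigma n m else @Dterm_one R nu sigma n m.

Definition Dconst (R : realType) (nu : nat) (x : R) : \bar R :=
  ereal_sup [set y : \bar R | exists (n : Zpt nu), exists2 sigma : R,
     4^-1 <= sigma & y = \esum_(m in [set: Zpt nu]) (@Dterm R nu x sigma n m)%:E].

From HB Require Import structures.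
From mathcomp Require Import all_boot all_order all_algebra.
From mathcomp Require Import all_classical all_reals all_analysis.
From mathcomp Require Import zify ring lra.
Import Order.TTheory GRing.Theory Num.Theory.
Local Open Scope ring_scope.

(* Write w(t) = e^{s t^x} if x < 1 and w(t) = (1 + t)^{nu+1} e^{s t} if x = 1,
   so that the summand of D_{nu,x} is w(|n|) / (w(|m|) w(|n - m|)).  Let
   b <= c be |m| and |n - m| in some order; then |n| <= b + c.  For x = 1 the
   exponentials cancel up to a factor at most 1 and 1 + |n| <= 2 (1 + c), so
   the summand is at most 2^{nu+1} (1 + b)^{-(nu+1)}.  For x < 1, concavity
   gives |n|^x <= c^x + x b^x, so the summand is at most e^{-s (1 - x) b^x},
   which for s >= 1/4 decays faster than any power of 1 + b.  Either way the
   summand is at most C ((1 + |m|)^{-(nu+1)} + (1 + |n - m|)^{-(nu+1)}) with C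
   independent of n and s, and both terms sum over m to the finite constant
   sum_m (1 + |m|)^{-(nu+1)}: at most (2k + 1)^nu points have norm <= k, so
   Abel summation bounds it by 2^nu (nu + 2).  The lower bound is the term
   m = 0 of the sum for n = 0. *)

Section RealInequalities.
Context {R : realType}.

Lemma powR1D_le (x u : R) : 0 <= x -> x <= 1 -> 0 <= u ->
  (1 + u) `^ x <= 1 + x * u.
Proof.
move=> x0 x1 u0.
have := @concave_ln R (Itv01 x0 x1) (1 + u) 1 ltac:(lra) ltac:(lra).
rewrite !convRE /= ln1 mulr0 addr0 => ln_le.
rewrite /powR gt_eqF; last lra.
rewrite -[X in _ <= X]lnK; last by rewrite posrE; nra.
rewrite ler_expR (le_trans ln_le) // /unstable.onem.
by have -> : x * (1 + u) + (1 - x) * 1 = 1 + x * u by ring.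
Qed.

(* The gap [(1 - x) * b `^ x] left below plain subadditivity is what makes the
   summand of D_{nu,x} decay when [x < 1]. *)
Lemma powR_le_add_scaled (x a b c : R) : 0 < x -> x <= 1 ->
  0 <= a -> 0 <= b -> b <= c -> a <= b + c ->
  a `^ x <= c `^ x + x * b `^ x.
Proof.
move=> x0 x1 a0 b0 bc abc.
have [c0 | c_neq0] := eqVneq c 0.
  have -> : a = 0 by lra.
  have -> : b = 0 by lra.
  rewrite c0 powR0 ?gt_eqF //; lra.
have c_gt0 : 0 < c by lra.
apply: (le_trans (ge0_ler_powR (ltW x0) _ _ abc)); rewrite ?nnegrE; try lra.
set u := b / c.
have u0 : 0 <= u by rewrite divr_ge0 //; lra.
have u1 : u <= 1 by rewrite ler_pdivrMr //; lra.
have -> : b + c = c * (1 + u) by rewrite /u; field; lra.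
have -> : b `^ x = c `^ x * u `^ x by rewrite -powRM ?(ltW c_gt0) // /u mulrC divfK.
rewrite powRM; try lra.
have cx0 : 0 <= c `^ x by apply: powR_ge0.
apply: (@le_trans _ _ (c `^ x * (1 + x * u))).
  by rewrite ler_wpM2l // powR1D_le //; lra.
rewrite mulrDr mulr1 lerD2l mulrCA; apply: ler_wpM2l; [lra | apply: ler_wpM2l => //].
have [-> | u_neq0] := eqVneq u 0; first by rewrite powR0 ?gt_eqF.
by apply: ger1_powR => //; apply/andP; split; lra.
Qed.

Lemma poly_le_expR_powR (x d : R) (q : nat) : 0 < x -> 0 < d ->
  exists2 C : R, 0 <= C &
    forall t : R, 0 <= t -> (1 + t) ^+ q <= C * expR (d * t `^ x).
Proof.
move=> x0 d0.
have q_x0 : 0 <= q%:R / x by rewrite divr_ge0 // ltW.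
set N := (Num.Def.archi_bound (q%:R / x)).+1.
have q_x_N : q%:R / x <= N%:R.
  by rewrite /N -addn1 natrD; have := archi_boundP q_x0; lra.
have dN : 0 < d ^+ N by rewrite exprn_gt0.
have fN : 0 < N`!%:R :> R by rewrite ltr0n fact_gt0.
have K0 : 0 <= N`!%:R / d ^+ N by rewrite divr_ge0 // ltW.
exists (2 ^+ q * (1 + N`!%:R / d ^+ N)).
  by rewrite mulr_ge0 ?exprn_ge0 //; lra.
move=> t t0; set y := d * t `^ x.
have y0 : 0 <= y by rewrite mulr_ge0 ?powR_ge0 // ltW.
have ey1 : 1 <= expR y by have := expR_ge1Dx y; lra.
rewrite -mulrA; have [t1 | t1] := lerP t 1.
  rewrite -[X in X <= _]mulr1; apply: ler_pM; rewrite ?exprn_ge0 ?lerXn2r ?nnegrE //; try lra.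
  by rewrite -[1]mul1r ler_pM //; lra.
apply: (@le_trans _ _ (2 ^+ q * t ^+ q)).
  by rewrite -exprMn lerXn2r ?nnegrE //; lra.
rewrite ler_wpM2l ?exprn_ge0 //.
have tq_le : t ^+ q <= (t `^ x) ^+ N.
  rewrite -(powR_mulrn N (powR_ge0 t x)) -powRrM -(powR_mulrn q t0).
  by apply: ler_powR; [lra | rewrite mulrC -ler_pdivrMr].
have yN_le : y ^+ N <= N`!%:R * expR y.
  by have := expR_ge1Dxn N.-1 y0; rewrite prednK // -ler_pdivrMl; lra.
apply: (le_trans tq_le).
have -> : (t `^ x) ^+ N = y ^+ N / d ^+ N by rewrite /y exprMn mulrC mulKf ?gt_eqF.
have ey0 : 0 <= expR y by apply: expR_ge0.
apply: (@le_trans _ _ (N`!%:R / d ^+ N * expR y)).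
  by rewrite [_ / _ * expR y]mulrAC ler_pM2r ?invr_gt0.
by rewrite ler_wpM2r // lerDr.
Qed.

Definition pdecay (q : nat) (t : R) : R := ((1 + t) ^+ q)^-1.

Lemma pdecay_ge0 q t : 0 <= t -> 0 <= pdecay q t.
Proof. by move=> t0; rewrite invr_ge0 exprn_ge0 //; lra. Qed.

Lemma pdecay_le q s t : 0 <= s -> s <= t -> pdecay q t <= pdecay q s.
Proof.
move=> s0 st; rewrite lef_pV2 ?posrE ?exprn_gt0 //; try lra.
by rewrite lerXn2r ?nnegrE //; lra.
Qed.

Lemma weight_ratio_le_pdecay (q : nat) (s a b c : R) :
  0 <= s -> 0 <= a -> 0 <= b -> 0 <= c -> a <= b + c ->
  (1 + a) ^+ q * expR (s * a) /
    ((1 + b) ^+ q * expR (s * b) * ((1 + c) ^+ q * expR (s * c)))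
  <= 2 ^+ q * (pdecay q b + pdecay q c).
Proof.
move=> s0 a0 b0 c0 abc.
wlog bc : b c b0 c0 abc / b <= c.
  move=> wlog_bc; have [/wlog_bc-> // | /ltW cb] := lerP b c.
  rewrite (mulrC ((1 + b) ^+ q * _)) (addrC (pdecay q b)); apply: wlog_bc; lra.
apply: (@le_trans _ _ (2 ^+ q * pdecay q b)).
  have pb : 0 < (1 + b) ^+ q by rewrite exprn_gt0 //; lra.
  have pc : 0 < (1 + c) ^+ q by rewrite exprn_gt0 //; lra.
  have eb := expR_gt0 (s * b); have ec := expR_gt0 (s * c).
  rewrite ler_pdivrMr; last by rewrite !mulr_gt0.
  have -> : 2 ^+ q * pdecay q b *
        ((1 + b) ^+ q * expR (s * b) * ((1 + c) ^+ q * expR (s * c)))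
      = (2 * (1 + c)) ^+ q * (expR (s * b) * expR (s * c)).
    by rewrite /pdecay exprMn; field; lra.
  apply: ler_pM; rewrite ?exprn_ge0 ?expR_ge0 //; try lra.
    by rewrite lerXn2r ?nnegrE //; lra.
  by rewrite -expRD ler_expR -mulrDr ler_wpM2l.
by rewrite ler_wpM2l ?exprn_ge0 // lerDl pdecay_ge0.
Qed.

Lemma expR_ratio_le_pdecay (q : nat) (x C s a b c : R) :
  0 < x -> x < 1 -> 4^-1 <= s ->
  0 <= a -> 0 <= b -> 0 <= c -> a <= b + c ->
  (forall t : R, 0 <= t -> (1 + t) ^+ q <= C * expR ((1 - x) / 4 * t `^ x)) ->
  expR (s * a `^ x) / (expR (s * b `^ x) * expR (s * c `^ x))
  <= C * (pdecay q b + pdecay q c).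
Proof.
move=> x0 x1 s4 a0 b0 c0 abc growth.
wlog bc : b c b0 c0 abc / b <= c.
  move=> wlog_bc; have [/wlog_bc-> // | /ltW cb] := lerP b c.
  rewrite (mulrC (expR (s * b `^ x))) (addrC (pdecay q b)); apply: wlog_bc; lra.
set y := (1 - x) / 4 * b `^ x.
have pb : 0 < (1 + b) ^+ q by rewrite exprn_gt0 //; lra.
have C0 : 0 < C.
  by have := lt_le_trans pb (growth b b0); rewrite pmulr_lgt0 ?expR_gt0.
apply: (@le_trans _ _ (C * pdecay q b)); last first.
  by rewrite ler_wpM2l ?(ltW C0) // lerDl pdecay_ge0.
rewrite -expRD -expRB; apply: (@le_trans _ _ (expR (- y))).
  have := @powR_le_add_scaled x a b c x0 (ltW x1) a0 b0 bc abc.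
  have bx0 : 0 <= b `^ x by apply: powR_ge0.
  have : 0 <= (s - 4^-1) * ((1 - x) * b `^ x) by rewrite mulr_ge0 //; nra.
  rewrite ler_expR /y; nra.
rewrite expRN -[X in X <= _]mul1r ler_pdivrMr ?expR_gt0 // mulrAC.
by rewrite ler_pdivlMr // mul1r growth.
Qed.

End RealInequalities.

Section AbelSummation.
Context {R : realType}.

Lemma telescope_indicator (u : nat -> R) (M K : nat) : (M <= K.+1)%N ->
  u M = u K.+1 + \sum_(k < K.+1) (M <= k)%:R * (u k - u k.+1).
Proof.
move=> MK.
rewrite (eq_bigr (fun k : 'I_K.+1 => if (M <= k)%N then u k - u k.+1 else 0));
  last by move=> k _; case: (M <= k)%N; rewrite ?mul1r ?mul0r.
rewrite -big_mkcond /=.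
have -> : \sum_(k < K.+1 | (M <= k)%N) (u k - u k.+1)
    = \sum_(M <= k < K.+1) (u k - u k.+1) by rewrite big_geq_mkord.
rewrite (@telescope_sumr_eq _ M K.+1 (fun k => - u k)) //;
  last by move=> k _; rewrite opprK addrC.
by rewrite opprK addNKr.
Qed.

Lemma exprS_sub_le (a : R) n : 0 <= a ->
  (a + 1) ^+ n.+1 - a ^+ n.+1 <= n.+1%:R * (a + 1) ^+ n.
Proof.
move=> a0; rewrite subrXX addrAC subrr add0r mul1r mulr_natl.
rewrite -[in X in _ <= X](card_ord n.+1) -sumr_const.
apply: ler_sum => i _.
rewrite /= -[in X in _ <= X](subnK (ltnSE (ltn_ord i))) exprD.
by apply: ler_wpM2l; rewrite ?exprn_ge0 ?lerXn2r ?nnegrE //; lra.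
Qed.

(* [(2k+1)^nu] is the number of points of Z^nu of norm at most [k]. *)
Lemma pdecay_increment_le (nu k : nat) :
  (k.*2.+1)%:R ^+ nu * (pdecay nu.+1 k%:R - pdecay nu.+1 k.+1%:R)
  <= 2 ^+ nu * nu.+1%:R * ((k.+1%:R)^-1 - (k.+2%:R)^-1) :> R.
Proof.
set a : R := k.+1%:R.
have a0 : 0 < a by rewrite ltr0n.
rewrite /pdecay; have -> : 1 + k%:R = a by rewrite /a -add1n natrD.
have -> : 1 + k.+1%:R = a + 1 by rewrite /a addrC -natr1.
have -> : k.+2%:R = a + 1 by rewrite /a -natr1.
set A := a ^+ nu; set B := (a + 1) ^+ nu.
have A0 : 0 < A by rewrite exprn_gt0.
have B0 : 0 < B by rewrite exprn_gt0 //; lra.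
have AB : A <= B by rewrite lerXn2r ?nnegrE //; lra.
have odd_le : (k.*2.+1)%:R ^+ nu <= 2 ^+ nu * A.
  rewrite /A -exprMn lerXn2r ?nnegrE ?ler0n //; first lra.
  by rewrite /a -natrM ler_nat; lia.
have diff_le : B * (a + 1) - A * a <= nu.+1%:R * B.
  by have := @exprS_sub_le a nu (ltW a0); rewrite !exprSr.
have -> : (a ^+ nu.+1)^-1 - ((a + 1) ^+ nu.+1)^-1
    = (B * (a + 1) - A * a) / (A * B * (a * (a + 1))).
  by rewrite !exprSr -/A -/B; field; repeat split; lra.
have -> : a^-1 - (a + 1)^-1 = 1 / (a * (a + 1)) by field; lra.
have -> : 2 ^+ nu * nu.+1%:R * (1 / (a * (a + 1)))
    = 2 ^+ nu * A * (nu.+1%:R * B) / (A * B * (a * (a + 1))).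
  by field; repeat split; lra.
rewrite mulrA ler_pM2r; last by rewrite invr_gt0 !mulr_gt0 //; lra.
by apply: ler_pM; rewrite ?exprn_ge0 ?ler0n //; nra.
Qed.

End AbelSummation.

Lemma sum_ord_itv_indicator (N a L : nat) :
  (\sum_(j < N) (a <= j < a + L) = minn N (a + L) - a)%N.
Proof.
elim: N => [|N IH]; first by rewrite big_ord0; lia.
rewrite big_ord_recr /= IH.
by case: (leqP a N) => aN; case: (ltnP N (a + L)) => NaL /=; lia.
Qed.

Lemma natr_bigmax_leq (R : comPzSemiRingType) (I : finType) (F : I -> nat) k :
  (\max_i F i <= k)%N%:R = \prod_i (F i <= k)%N%:R :> R.
Proof.
have [/forallP F_le | ] := boolP [forall i, F i <= k]%N.
  have -> : (\max_i F i <= k)%N by apply/bigmax_leqP => i _; exact: F_le.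
  by rewrite big1 // => i _; rewrite F_le.
rewrite negb_forall => /existsP [i F_gt].
have -> : (\max_i F i <= k)%N = false.
  by apply/negbTE; apply: contra F_gt => /bigmax_leqP; apply.
by rewrite (bigD1 i) //= (negbTE F_gt) mul0r.
Qed.

Section Box.
Context {R : realType} {nu : nat}.

(* The box [-K, K]^nu of Z^nu, enumerated by a finite type. *)
Definition boxpt {K : nat} (f : {ffun 'I_nu -> 'I_(K + K).+1}) : Zpt nu :=
  [ffun i => (f i)%:Z - K%:Z].

Lemma boxpt_inj K : injective (@boxpt K).
Proof.
move=> f g /ffunP fg; apply/ffunP => i; apply: val_inj => /=.
by have := fg i; rewrite !ffunE; lia.
Qed.

Lemma boxpt_norm_le K f : (\max_(i < nu) `|@boxpt K f i| <= K)%N.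
Proof. by apply/bigmax_leqP => i _; rewrite ffunE; have := ltn_ord (f i); lia. Qed.

Lemma box_count_le K j :
  \sum_(f : {ffun 'I_nu -> 'I_(K + K).+1}) (\max_(i < nu) `|boxpt f i| <= j)%N%:R
  <= (j.*2.+1)%:R ^+ nu :> R.
Proof.
under eq_bigr do rewrite natr_bigmax_leq; under eq_bigr do under eq_bigr do rewrite ffunE.
rewrite -(bigA_distr_bigA (fun _ (k : 'I_(K + K).+1) => (`|k%:Z - K%:Z| <= j)%N%:R)).
rewrite prodr_const card_ord lerXn2r ?nnegrE ?sumr_ge0 ?ler0n //.
rewrite -natr_sum ler_nat.
apply: (@leq_trans (\sum_(k < (K + K).+1) (K - j <= k < K - j + j.*2.+1))%N).
  by apply: leq_sum => k _; case: (ltnP j `|k%:Z - K%:Z|%N) => /=; lia.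
by rewrite sum_ord_itv_indicator; lia.
Qed.

(* Abel summation over the shells [maxnorm m = k] of the box. *)
Lemma box_pdecay_sum_le K :
  \sum_(f : {ffun 'I_nu -> 'I_(K + K).+1}) pdecay nu.+1 (maxnorm R (boxpt f))
  <= 2 ^+ nu * (nu.+1%:R + 1).
Proof.
set u := fun k : nat => pdecay nu.+1 k%:R : R.
under eq_bigr do rewrite /maxnorm -/(u _) (telescope_indicator u _ _ (leqW (boxpt_norm_le _ _))).
rewrite big_split /= sumr_const card_ffun !card_ord exchange_big /= addrC.
rewrite [X in _ <= X]mulrDr mulr1; apply: lerD; last first.
  rewrite -[u K.+1 *+ _]mulr_natr natrX /u /pdecay.
  rewrite -[(K + K).+1%:R]natr1 -[K.+1%:R]natr1 natrD.
  have K0 : 0 <= K%:R :> R by [].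
  rewrite ler_pdivrMl ?exprn_gt0 //.
  set X : R := 1 + (K%:R + 1).
  apply: (@le_trans _ _ ((2 * X) ^+ nu)); first by rewrite lerXn2r ?nnegrE /X //; lra.
  have : 0 <= X ^+ nu * 2 ^+ nu by rewrite mulr_ge0 ?exprn_ge0 /X //; lra.
  rewrite exprMn exprS /X; nra.
under eq_bigr do rewrite -mulr_suml.
apply: (@le_trans _ _ (\sum_(k < K.+1) 2 ^+ nu * nu.+1%:R * ((k.+1%:R)^-1 - (k.+2%:R)^-1))).
  apply: ler_sum => k _; apply: le_trans (@pdecay_increment_le R nu k).
  by rewrite ler_wpM2r ?box_count_le // subr_ge0 pdecay_le // ler_nat.
rewrite -mulr_sumr -(big_mkord xpredT (fun k => (k.+1%:R)^-1 - (k.+2%:R)^-1)).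
rewrite (@telescope_sumr_eq _ 0 K.+1 (fun k => - (k.+1%:R)^-1)) //;
  last by move=> k _; rewrite opprK addrC.
by rewrite ger_pMr ?mulr_gt0 ?exprn_gt0 ?ltr0n // invr1 opprK gerDr oppr_le0.
Qed.

End Box.

Section LatticeSums.
Context {R : realType} {nu : nat}.
Local Open Scope classical_set_scope.

Lemma esum_le_box (g : Zpt nu -> R) (M : R) : (forall m, 0 <= g m) ->
  (forall K, \sum_(f : {ffun 'I_nu -> 'I_(K + K).+1}) g (boxpt f) <= M) ->
  (\esum_(m in [set: Zpt nu]) (g m)%:E <= M%:E)%E.
Proof.
move=> g0 box_le; apply: ge_ereal_sup => _ [X [finX _] <-].
set K := (\max_(m <- finmap.enum_fset (fset_set X)) \max_(i < nu) `|m i|)%N.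
set s := [seq boxpt f | f <- enum {ffun 'I_nu -> 'I_(K + K).+1}].
have s_uniq : uniq s by rewrite map_inj_uniq ?enum_uniq //; apply: boxpt_inj.
apply: (@le_trans _ _ (\sum_(m \in [set` s]) (g m)%:E)%E).
  apply: lee_fsum_nneg_subset => //; [exact: finite_seq | | by move=> m _; rewrite lee_fin].
  move=> m; rewrite !inE /= => Xm.
  have mK i : (`|m i| <= K)%N.
    apply: leq_trans (@leq_bigmax _ (fun i => `|m i|%N) i) _.
    apply: (leq_bigmax_seq (F := fun m : Zpt nu => \max_(i < nu) `|m i|%N)) => //.
    by rewrite in_fset_set ?inE.
  apply/mapP; exists [ffun i => inord `|m i + K%:Z|]; first by rewrite mem_enum.
  by apply/ffunP => i; rewrite !ffunE inordK; have := mK i; move: (m i) => z; lia.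
by rewrite -fsbig_seq // sumEFin lee_fin big_map big_enum /= box_le.
Qed.

Lemma maxnorm_ge0 (m : Zpt nu) : 0 <= maxnorm R m.
Proof. exact: ler0n. Qed.

Lemma maxnorm_zsub_le (n m : Zpt nu) :
  maxnorm R n <= maxnorm R m + maxnorm R (zsub n m).
Proof.
rewrite -natrD ler_nat; apply/bigmax_leqP => i _.
apply: leq_trans (leq_add (@leq_bigmax _ (fun i => `|m i|%N) i)
                          (@leq_bigmax _ (fun i => `|zsub n m i|%N) i)).
by rewrite ffunE; lia.
Qed.

Lemma esum_zsub (n : Zpt nu) (a : Zpt nu -> \bar R) :
  \esum_(m in [set: Zpt nu]) a (zsub n m) = \esum_(m in [set: Zpt nu]) a m.
Proof.
symmetry; apply: reindex_esum; split => //.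
- move=> m1 m2 _ _ /ffunP eq12; apply/ffunP => i.
  by have := eq12 i; rewrite !ffunE => /addrI/oppr_inj.
- by move=> m _; exists (zsub n m) => //; apply/ffunP => i; rewrite !ffunE subKr.
Qed.

End LatticeSums.

Section DtermBounds.
Context {R : realType} (nu : nat) {x : R}.
Hypothesis x_gt0 : 0 < x.
Local Open Scope classical_set_scope.

Lemma Dterm_le_pdecay : exists2 C : R, 0 <= C &
  forall (n m : Zpt nu) (s : R), 4^-1 <= s ->
    Dterm x s n m <= C * (pdecay nu.+1 (maxnorm R m) + pdecay nu.+1 (maxnorm R (zsub n m))).
Proof.
have norm_ge0 := @maxnorm_ge0 R nu; have norm_le := @maxnorm_zsub_le R nu.
rewrite /Dterm; have [x_lt1 | x_ge1] := ltrP x 1.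
  have [|C C0 growth] := @poly_le_expR_powR R x ((1 - x) / 4) nu.+1 x_gt0.
    by rewrite divr_gt0 //; lra.
  by exists C => // n m s s4; apply: expR_ratio_le_pdecay.
exists (2 ^+ nu.+1); first by rewrite exprn_ge0.
by move=> n m s s4; apply: weight_ratio_le_pdecay => //; lra.
Qed.

Lemma esum_Dterm_le : exists B : R, forall (n : Zpt nu) (s : R), 4^-1 <= s ->
  (\esum_(m in [set: Zpt nu]) (Dterm x s n m)%:E <= B%:E)%E.
Proof.
have [C C0 Dterm_le] := Dterm_le_pdecay.
set W : R := 2 ^+ nu * (nu.+1%:R + 1).
have termC_ge0 (m : Zpt nu) : (0 <= (C * pdecay nu.+1 (maxnorm R m))%:E)%E.
  by rewrite lee_fin mulr_ge0 // pdecay_ge0 // maxnorm_ge0.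
have sumC_le : (\esum_(m in [set: Zpt nu]) (C * pdecay nu.+1 (maxnorm R m))%:E
    <= (C * W)%:E)%E.
  apply: esum_le_box => [m|K]; first by rewrite -lee_fin.
  by rewrite -mulr_sumr ler_wpM2l ?box_pdecay_sum_le.
exists (C * W + C * W) => n s s4.
apply: (@le_trans _ _ (\esum_(m in [set: Zpt nu])
   ((C * pdecay nu.+1 (maxnorm R m))%:E + (C * pdecay nu.+1 (maxnorm R (zsub n m)))%:E))%E).
  by apply: le_esum => m _; rewrite -EFinD lee_fin -mulrDr Dterm_le.
rewrite esumD // (esum_zsub n (fun m => (C * pdecay nu.+1 (maxnorm R m))%:E)) EFinD.
exact: leeD.
Qed.

Lemma esum_Dterm0_ge1 (s : R) :
  (1 <= \esum_(m in [set: Zpt nu]) (Dterm x s [ffun=> 0] m)%:E)%E.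
Proof.
set z : Zpt nu := [ffun=> 0].
apply: esum_ge; exists [set z]; first by split; [exact: finite_set1 | ].
have norm0 (m : Zpt nu) : (forall i, m i = 0) -> maxnorm R m = 0.
  by move=> m0; rewrite /maxnorm big1 // => i _; rewrite m0.
rewrite fsbig_set1 lee_fin /Dterm /Dterm_sub /Dterm_one /Dweight.
rewrite !norm0 => [|i|i]; rewrite ?ffunE ?subrr //.
case: ifP => _; first by rewrite powR0 ?gt_eqF // mulr0 expR0 mulr1 divr1.
by rewrite mulr0 expR0 addr0 expr1n !mulr1 divr1.
Qed.

End DtermBounds.

Theorem proposition17 (R : realType) (nu : nat) (x : R) :
  0 < x -> x <= 1 ->
  (1%:E <= Dconst nu x)%E /\ (Dconst nu x < +oo)%E.
Proof.
move=> x_gt0 _; split.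
  apply: le_trans (esum_Dterm0_ge1 nu x_gt0 1) _.
  by apply: ereal_sup_ubound; exists [ffun=> 0]; exists 1 => //; lra.
have [B esum_le] := esum_Dterm_le nu x_gt0.
apply: (@le_lt_trans _ _ B%:E); last exact: ltey.
by apply: ge_ereal_sup => _ [n [s s4 ->]]; exact: esum_le.
Qed.
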